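(* Let $p,q,N$ be positive integers and $\mathbf{C}=\begin{bmatrix}1 & p\\ q & 1+pq\end{bmatrix}$. The least period of the Cat map over $\mathbb{Z}_N$ is $T$ if and only if $T$ is the minimum positive integer $n$ satisfying $$p H_n\equiv 0,\quad qH_n\equiv 0,\quad \tfrac12 G_n-\tfrac12 pqH_n\equiv 1,\quad \tfrac12 G_n+\tfrac12 pqH_n\equiv 1 \pmod N.$$
   Context: The Cat map over $\mathbb{Z}_N$ is $v\mapsto \mathbf{C}v\bmod N$ on $\mathbb{Z}_N^2$; its least period is the least positive integer $n$ with $\mathbf{C}^nv\equiv v\pmod N$ for all $v\in\mathbb{Z}_N^2$. Put $A=pq+2$, $B=\sqrt{A^2-4}$, $G_n=\left(\frac{A+B}{2}\right)^n+\left(\frac{A-B}{2}\right)^n$, $H_n=\frac{1}{B}\left(\left(\frac{A+B}{2}\right)^n-\left(\frac{A-B}{2}\right)^n\right)$; $H_n$ and $\frac12G_n\pm\frac12pqH_n$ are integers (they are entries of $\mathbf{C}^n$). *)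

From HB Require Import structures.
From mathcomp Require Import all_boot all_order all_algebra.
From mathcomp Require Import reals.
Set Implicit Arguments. Unset Strict Implicit. Unset Printing Implicit Defensive.
Import Order.TTheory GRing.Theory Num.Theory.
Local Open Scope ring_scope.

Definition catC (p q : nat) : 'M[int]_2 :=
  \matrix_(i < 2, j < 2)
    if i == 0 then (if j == 0 then 1 else p%:Z)
    else (if j == 0 then q%:Z else 1 + p%:Z * q%:Z).

(* C^n v = v (mod N) for every v in Z_N^2 (vectors represented by integer
   column vectors, equality taken entrywise modulo N). *)
Definition cat_fixes (N : nat) (C : 'M[int]_2) (n : nat) : Prop :=
  forall v : 'cV[int]_2, forall i : 'I_2,
    (N%:Z %| ((C ^+ n) *m v - v) i ord0)%Z.

Definition cat_least_period (N : nat) (C : 'M[int]_2) (T : nat) : Prop :=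
  (0 < T)%N /\ cat_fixes N C T /\
  forall n : nat, (0 < n)%N -> cat_fixes N C n -> (T <= n)%N.

Section Seqs.
Variable R : realType.

Definition Acat (p q : nat) : R := (p * q + 2)%:R.
Definition Bcat (p q : nat) : R := Num.sqrt (Acat p q ^+ 2 - 4).
Definition Gcat (p q n : nat) : R :=
  ((Acat p q + Bcat p q) / 2) ^+ n + ((Acat p q - Bcat p q) / 2) ^+ n.
Definition Hcat (p q n : nat) : R :=
  (((Acat p q + Bcat p q) / 2) ^+ n - ((Acat p q - Bcat p q) / 2) ^+ n)
    / Bcat p q.

(* Congruence modulo N for reals (which here are integers):
   x = y (mod N) iff x - y is an integer multiple of N. *)
Definition congR (N : nat) (x y : R) : Prop :=
  exists k : int, x - y = k%:~R * N%:R.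

Definition cat_conds (p q N n : nat) : Prop :=
  [/\ congR N (p%:R * Hcat p q n) 0,
      congR N (q%:R * Hcat p q n) 0,
      congR N (Gcat p q n / 2 - (p * q)%:R * Hcat p q n / 2) 1
    & congR N (Gcat p q n / 2 + (p * q)%:R * Hcat p q n / 2) 1].
End Seqs.

(* C has trace A = pq + 2 and determinant 1, so C^2 = A C - 1 and every entry of
   C^n satisfies the recurrence x(n+2) = A x(n+1) - x(n); hence the entries are
   integer combinations of the Lucas sequence U_n(A, 1).  The eigenvalues
   (A +- B)/2 have sum A and product 1, so Binet's formula gives H_n = U_n and
   G_n = 2 U_(n+1) - A U_n.  The four congruences then say exactly that
   C^n = I entrywise modulo N, i.e. that C^n fixes every vector of Z_N^2. *)

From HB Require Import structures.
From mathcomp Require Import all_boot all_order all_algebra.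
From mathcomp Require Import reals.
From mathcomp Require Import ring lra.
Import Order.TTheory GRing.Theory Num.Theory.
Local Open Scope ring_scope.

Fixpoint lucasU {R : pzRingType} (a : R) (n : nat) : R :=
  match n with
  | 0%N => 0
  | 1%N => 1
  | (m.+1 as n').+1 => a * lucasU a n' - lucasU a m
  end.

Section LucasSequence.
Context {R : comPzRingType} {a : R}.

Lemma lucasUSS n : lucasU a n.+2 = a * lucasU a n.+1 - lucasU a n.
Proof. by []. Qed.

(* U_(n+1) - a U_n = -U_(n-1) is the solution with initial values (1, 0). *)
Lemma lucas_recurrence_solution {u : nat -> R} :
    (forall n, u n.+2 = a * u n.+1 - u n) ->
  forall n, u n = u 1%N * lucasU a n + u 0%N * (lucasU a n.+1 - a * lucasU a n).
Proof.
move=> urec n; pose w k := u 1%N * lucasU a k + u 0%N * (lucasU a k.+1 - a * lucasU a k).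
suff [] : u n = w n /\ u n.+1 = w n.+1 by [].
rewrite /w.
elim: n => [|n [IHn IHn1]]; first by split; rewrite /= ?mulr0 ?mulr1; ring.
by split=> //; rewrite urec IHn IHn1 !lucasUSS; ring.
Qed.

Lemma lucasU_binet {x y : R} n :
  x * y = 1 -> x + y = a -> (x - y) * lucasU a n = x ^+ n - y ^+ n.
Proof.
move=> xy1 xya; set u := fun n => x ^+ n - y ^+ n.
have urec k : u k.+2 = a * u k.+1 - u k.
  by rewrite /u -xya -[x ^+ k]mul1r -[y ^+ k]mul1r -{1 2}xy1 !exprS; ring.
by rewrite -/(u n) (lucas_recurrence_solution urec) /u expr0 subrr; ring.
Qed.

Lemma lucasV_lucasU {x y : R} n : x * y = 1 -> x + y = a ->
  x ^+ n + y ^+ n = 2 * lucasU a n.+1 - a * lucasU a n.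
Proof.
move=> xy1 xya; set v := fun n => x ^+ n + y ^+ n.
have vrec k : v k.+2 = a * v k.+1 - v k.
  by rewrite /v -xya -[x ^+ k]mul1r -[y ^+ k]mul1r -{1 2}xy1 !exprS; ring.
by rewrite -/(v n) (lucas_recurrence_solution vrec) /v xya; ring.
Qed.

End LucasSequence.

Lemma rmorph_lucasU {R S : comPzRingType} (f : {rmorphism R -> S}) (a : R) n :
  f (lucasU a n) = lucasU (f a) n.
Proof.
have frec k : f (lucasU a k.+2) = f a * f (lucasU a k.+1) - f (lucasU a k).
  by rewrite lucasUSS rmorphB rmorphM.
by rewrite (lucas_recurrence_solution frec) /= rmorph0 rmorph1; ring.
Qed.

Section CatEigenvalues.
Variables (R : realType) (p q : nat).
Hypotheses (p_gt0 : (0 < p)%N) (q_gt0 : (0 < q)%N).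

Let A : R := Acat R p q.
Let B : R := Bcat R p q.
Let lambda : R := (A + B) / 2.
Let mu : R := (A - B) / 2.

Let Acat_ge3 : 3 <= A.
Proof.
have : (3 <= p * q + 2)%N by rewrite -[3%N]/(1 + 2)%N leq_add2r muln_gt0 p_gt0.
by rewrite -(ler_nat R).
Qed.

Let Bcat_gt0 : 0 < B.
Proof. by rewrite sqrtr_gt0; have := Acat_ge3; nra. Qed.

Let Bcat_sqr : B ^+ 2 = A ^+ 2 - 4.
Proof. by rewrite sqr_sqrtr //; have := Acat_ge3; nra. Qed.

Let eigen_mul : lambda * mu = 1.
Proof.
have -> : lambda * mu = (A ^+ 2 - B ^+ 2) / 4 by rewrite /lambda /mu; field.
by rewrite Bcat_sqr; field.
Qed.

Let eigen_add : lambda + mu = A.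
Proof. by rewrite /lambda /mu; field. Qed.

Let eigen_sub : lambda - mu = B.
Proof. by rewrite /lambda /mu; field. Qed.

Lemma Hcat_lucasU n : Hcat R p q n = (lucasU (p * q + 2)%N%:Z n)%:~R.
Proof.
rewrite /Hcat -/A -/B -/lambda -/mu -(lucasU_binet n eigen_mul eigen_add).
rewrite eigen_sub mulrC mulKf ?gt_eqF //.
by rewrite (rmorph_lucasU (intr : int -> R)).
Qed.

Lemma Gcat_lucasU n :
  Gcat R p q n = (2 * lucasU (p * q + 2)%N%:Z n.+1
                  - (p * q + 2)%N%:Z * lucasU (p * q + 2)%N%:Z n)%:~R.
Proof.
rewrite /Gcat -/A -/B -/lambda -/mu (lucasV_lucasU n eigen_mul eigen_add).
by rewrite rmorphB !rmorphM !(rmorph_lucasU (intr : int -> R)).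
Qed.

End CatEigenvalues.

Lemma congR_intr {R : realType} N {x y : R} {z : int} :
  x - y = z%:~R -> congR N x y <-> (N%:Z %| z)%Z.
Proof.
rewrite /congR => ->; split=> [[k] | /dvdzP[k ->]]; last by exists k; rewrite intrM.
by rewrite pmulrn -intrM => /intr_inj ->; apply: dvdz_mull.
Qed.

Lemma mx_fixes_dvdz (N : int) n (M : 'M[int]_n) :
  (forall (v : 'cV_n) i, (N %| (M *m v - v) i ord0)%Z) <->
  (forall i j, (N %| (M - 1%:M) i j)%Z).
Proof.
split=> [fixM i j | dvdM v i].
  by have := fixM (delta_mx j ord0) i; rewrite -colE !mxE eqxx andbT.
rewrite -{2}[v]mul1mx -mulmxBl mxE; apply: rpred_sum => k _.
exact: dvdz_mulr.
Qed.

Lemma ord2_cases (i : 'I_2) : i = 0 \/ i = 1.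
Proof. by case: i => [[|[|//]] ?]; [left | right]; apply: val_inj. Qed.

Lemma forall_ord2_ord2 (P : 'I_2 -> 'I_2 -> Prop) :
  (forall i j, P i j) <-> [/\ P 0 0, P 0 1, P 1 0 & P 1 1].
Proof.
split=> [allP | [P00 P01 P10 P11] i j]; first by split.
by case: (ord2_cases i) (ord2_cases j) => -> [] ->.
Qed.

Section CatMatrix.
Variables p q : nat.

Let C := catC p q.
Let a : int := (p * q + 2)%N%:Z.
Let h n := lucasU a n.

Lemma catC_sqr : C ^+ 2 = a *: C - 1.
Proof.
apply/matrixP => i j; rewrite !mxE !big_ord_recl big_ord0 !mxE /=.
by case: (ord2_cases i) (ord2_cases j) => -> [] -> /=; rewrite ?PoszD ?PoszM; ring.
Qed.

Lemma catC_expSS n i j : (C ^+ n.+2) i j = a * (C ^+ n.+1) i j - (C ^+ n) i j.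
Proof. by rewrite -[n.+2]addn2 exprD catC_sqr mulrBr mulr1 -scalerAr -exprSr !mxE. Qed.

Lemma catC_expE n i j :
  (C ^+ n) i j = C i j * h n + (i == j)%:R * (h n.+1 - a * h n).
Proof. by rewrite (lucas_recurrence_solution (fun k => catC_expSS k i j)) expr1 expr0 !mxE. Qed.

Lemma catC_exp_sub1 n :
  C ^+ n - 1 = \matrix_(i, j)
    if i == 0 then (if j == 0 then h n.+1 - (p * q + 1)%N%:Z * h n - 1 else p%:Z * h n)
    else (if j == 0 then q%:Z * h n else h n.+1 - h n - 1).
Proof.
apply/matrixP => i j; rewrite !mxE catC_expE !mxE.
by case: (ord2_cases i) (ord2_cases j) => -> [] -> /=; rewrite /a ?PoszD ?PoszM; ring.
Qed.

Lemma cat_fixes_dvdz N n : cat_fixes N C n <->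
  [/\ (N%:Z %| p%:Z * h n)%Z, (N%:Z %| q%:Z * h n)%Z,
      (N%:Z %| h n.+1 - (p * q + 1)%N%:Z * h n - 1)%Z
    & (N%:Z %| h n.+1 - h n - 1)%Z].
Proof.
rewrite /cat_fixes mx_fixes_dvdz catC_exp_sub1 forall_ord2_ord2 !mxE /=.
by split=> [[] | []].
Qed.

End CatMatrix.

Lemma cat_conds_fixes (R : realType) p q N n : (0 < p)%N -> (0 < q)%N ->
  cat_conds R p q N n <-> cat_fixes N (catC p q) n.
Proof.
move=> p_gt0 q_gt0; rewrite cat_fixes_dvdz /cat_conds Gcat_lucasU // Hcat_lucasU //.
set h := lucasU _ n; set h' := lucasU _ n.+1.
have e1 : p%:R * h%:~R - 0 = (p%:Z * h)%:~R :> R by ring.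
have e2 : q%:R * h%:~R - 0 = (q%:Z * h)%:~R :> R by ring.
have e3 : (2 * h' - (p * q + 2)%N%:Z * h)%:~R / 2 - (p * q)%:R * h%:~R / 2 - 1
          = (h' - (p * q + 1)%N%:Z * h - 1)%:~R :> R by field.
have e4 : (2 * h' - (p * q + 2)%N%:Z * h)%:~R / 2 + (p * q)%:R * h%:~R / 2 - 1
          = (h' - h - 1)%:~R :> R by field.
by split=> -[/(congR_intr N e1) ? /(congR_intr N e2) ?
              /(congR_intr N e3) ? /(congR_intr N e4) ?].
Qed.

Theorem proposition1 (R : realType) (p q N T : nat) :
  (0 < p)%N -> (0 < q)%N -> (0 < N)%N ->
  (cat_least_period N (catC p q) T <->
   [/\ (0 < T)%N, cat_conds R p q N T &
       forall n : nat, (0 < n)%N -> cat_conds R p q N n -> (T <= n)%N]).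
Proof.
(* Modulo N = 0 both sides read as exact equalities. *)
move=> p_gt0 q_gt0 _; have condsE n := cat_conds_fixes R p q N n p_gt0 q_gt0.
split=> [[T_gt0 [fixT minT]] | [T_gt0 condT minT]].
  by split=> // [|n n_gt0 /condsE]; [apply/condsE | apply: minT].
by split=> //; split=> [|n n_gt0 /condsE]; [apply/condsE | apply: minT].
Qed.
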